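(* Let $X$ be a finite connected rack with $n$ elements, identified with $[n]=\{1,\dots,n\}$ via a fixed bijection, and let $\mathcal{M}$ be the set of maximal (proper) subracks of $X$. Then every $S\in\mathsf{Inf}(\mathcal{R}(X))$ satisfies $\eta(S)=S$, i.e. $\mathsf{Inf}(\mathcal{R}(X))\subseteq\eta(\mathcal{R}(X))$; consequently $\pi$ restricts to an isomorphism of posets between $\mathsf{Inf}(\mathcal{R}(X))$ and $\pi(\mathsf{Inf}(\mathcal{R}(X)))\subseteq\Pi_n$. Moreover, $\mathsf{Inf}(\mathcal{R}(X))$ is isomorphic to a subposet of $\mathsf{Inf}(\Pi_n,\pi(\mathcal{M}))$.
   Context: A rack is a set $X$ with a binary operation $\triangleright$ such that $a\triangleright(b\triangleright c)=(a\triangleright b)\triangleright(a\triangleright c)$ for all $a,b,c$, and each map $\phi_a\colon x\mapsto a\triangleright x$ is a bijection of $X$. Subracks are subsets closed under $\triangleright$ (including $\emptyset$); $\mathcal{R}(X)$ is the lattice of subracks ordered by inclusion, and $\overline{\mathcal{R}(X)}=\mathcal{R}(X)\setminus\{X,\emptyset\}$. $\mathsf{Inn}(X)=\langle\phi_a: a\in X\rangle$; $X$ is connected if $\mathsf{Inn}(X)$ acts transitively on $X$. For a subrack $S$, its orbit structure $\pi(S)$ is the partition of $X$ into the orbits of the group $\langle\phi_a: a\in S\rangle$; $\eta(S)$ is the largest subrack of $X$ having the same orbit structure as $S$. $\Pi_n$ is the lattice of set partitions of $[n]$ ordered by refinement. For a finite lattice $\mathcal{L}$ with proper part $\overline{\mathcal{L}}$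 (maximum and minimum removed) and $\mathcal{S}\subseteq\overline{\mathcal{L}}$, $\mathsf{Inf}(\mathcal{L},\mathcal{S})$ is the subposet of $\overline{\mathcal{L}}$ consisting of elements that are meets of sets of elements of $\mathcal{S}$; $\mathsf{Inf}(\mathcal{L})=\mathsf{Inf}(\mathcal{L},\text{coatoms of }\mathcal{L})$. *)

From mathcomp Require Import all_boot all_fingroup.
Set Implicit Arguments. Unset Strict Implicit. Unset Printing Implicit Defensive.

Section Rack.
Variable n : nat.
Notation T := 'I_n.
Variable op : T -> T -> T.

Definition is_rack : Prop :=
  (forall a b c, op a (op b c) = op (op a b) (op a c)) /\
  (forall a, bijective (op a)).

(* phi_a as a permutation (identity if op a were not injective; never
   happens for a rack). *)
Definition phi (a : T) : {perm T} :=
  match @idP (injectiveb (op a)) with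
  | ReflectT h => perm (injectiveP _ h)
  | ReflectF _ => 1%g
  end.

Definition subrack (S : {set T}) : bool :=
  [forall a in S, forall b in S, op a b \in S].

Definition gen_grp (S : {set T}) : {group {perm T}} :=
  <<[set phi a | a in S]>>%G.

Definition Inn : {group {perm T}} := gen_grp [set: T].

Definition connected : Prop := [transitive Inn, on [set: T] | 'P].

Definition orbit_str (S : {set T}) : {set {set T}} :=
  [set orbit 'P (gen_grp S) x | x : T].

(* eta(S): the largest subrack with the same orbit structure as S,
   i.e. the union of all such subracks *)
Definition eta (S : {set T}) : {set T} :=
  \bigcup_(R : {set T} | subrack R && (orbit_str R == orbit_str S)) R.

Definition maximal_subrack (M : {set T}) : bool :=
  [&& subrack M, M != [set: T] &
      [forall R : {set T}, (subrack R && (M \proper R)) ==> (R == [set: T])]].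

(* Inf(R(X)) : proper subracks that are intersections (= meets in R(X))
   of sets of maximal subracks *)
Definition InfR (S : {set T}) : Prop :=
  [/\ subrack S, S != [set: T], S != set0 &
      exists F : {set {set T}},
        (forall M, M \in F -> maximal_subrack M) /\
        S = \bigcap_(M in F) M].

Definition is_part (P : {set {set T}}) : bool := partition P [set: T].

Definition refines (P Q : {set {set T}}) : bool :=
  [forall B in P, exists C in Q, B \subset C].

Definition part_bot : {set {set T}} := [set [set x] | x : T].
Definition part_top : {set {set T}} := [set [set: T]].

Definition is_meet_part (G : {set {set {set T}}}) (P : {set {set T}}) : Prop :=
  is_part P /\
  (forall Q, Q \in G -> refines P Q) /\
  (forall R, is_part R -> (forall Q, Q \in G -> refines R Q) -> refines R P).

Definition InfPi (F : {set {set {set T}}}) (P : {set {set T}}) : Prop :=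
  [/\ is_part P, P != part_bot, P != part_top &
      exists G : {set {set {set T}}}, G \subset F /\ is_meet_part G P].

Definition pi_maximals : {set {set {set T}}} :=
  [set orbit_str M | M in [set M : {set T} | maximal_subrack M]].

End Rack.

From Pilot Require Import Defs.
From mathcomp Require Import all_boot all_fingroup.
Set Implicit Arguments. Unset Strict Implicit. Unset Printing Implicit Defensive.

(* Let S be an intersection of maximal subracks of a connected rack X and let
   R be a subrack whose orbit structure refines that of every maximal subrack
   M containing S.  Each phi_r, r in R, then preserves every orbit of M, hence
   M itself; the elements x with phi_x stabilising M form a subrack containing
   M, which is all of X as soon as it contains some r outside M.  But then
   Inn(X) stabilises M, and connectedness forces M = X.  So R lies in every
   such M, hence in S.  Applied to the subracks with the orbit structure of S
   this gives eta(S) = S and the order embedding into Pi_n; composing with the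
   meet of the pi(M), M containing S, gives the embedding into
   Inf(Pi_n, pi(M)). *)

Local Open Scope group_scope.

Lemma perm_astabs (T : finType) (M : {set T}) (p : {perm T}) :
  {in M, forall x, p x \in M} -> p \in 'N(M | 'P).
Proof. by move=> pM; rewrite !inE; apply/subsetP => x Mx; rewrite inE /= /aperm pM. Qed.

Section Rack.
Variables (n : nat) (op : 'I_n -> 'I_n -> 'I_n).
Hypothesis rackX : is_rack op.
Local Notation T := 'I_n.
Local Notation phi := (phi op).
Local Notation orb S x := (orbit 'P (gen_grp op S) x).
Local Notation pi := (orbit_str op).

Lemma refines_trans (P Q R : {set {set T}}) :
  refines P Q -> refines Q R -> refines P R.
Proof.
move=> /forall_inP PQ /forall_inP QR; apply/forall_inP => B /PQ /exists_inP [C CQ sBC].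
have /exists_inP [D DR sCD] := QR C CQ.
by apply/exists_inP; exists D => //; apply: subset_trans sBC sCD.
Qed.

Lemma phiE a x : phi a x = op a x.
Proof.
rewrite /Defs.phi; destruct (@idP (injectiveb (op a))) as [inj_a | not_inj].
  by rewrite permE.
by case: not_inj; apply/injectiveP; case: rackX => _ /(_ a) /bij_inj.
Qed.

Lemma phi_op a b : phi (op a b) = (phi a)^-1 * phi b * phi a.
Proof.
apply: (mulgI (phi a)); rewrite !mulgA mulgV mul1g.
by apply/permP => x; rewrite !permM !phiE; case: rackX => selfdistr _; rewrite -selfdistr.
Qed.

Lemma phi_gen_grp (S : {set T}) a : a \in S -> phi a \in gen_grp op S.
Proof. by move=> Sa; apply/mem_gen/imset_f. Qed.

Lemma subrack_phi_astabs (M : {set T}) a :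
  subrack op M -> a \in M -> phi a \in 'N(M | 'P).
Proof.
move=> /forall_inP subM Ma; apply: perm_astabs => x Mx.
by rewrite phiE (forall_inP (subM a Ma)).
Qed.

Lemma gen_grp_acts (M : {set T}) : subrack op M -> [acts gen_grp op M, on M | 'P].
Proof.
move=> subM; rewrite gen_subG; apply/subsetP => _ /imsetP [a Ma ->].
exact: subrack_phi_astabs.
Qed.

Lemma orbit_sub_subrack (M : {set T}) x : subrack op M -> x \in M -> orb M x \subset M.
Proof. by move=> subM Mx; rewrite acts_sub_orbit ?gen_grp_acts. Qed.

Lemma subrack_phi_preim (H : {group {perm T}}) : subrack op [set x | phi x \in H].
Proof.
apply/forall_inP => a; rewrite inE => Ha; apply/forall_inP => b; rewrite inE => Hb.
by rewrite inE phi_op !groupM ?groupV.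
Qed.

Lemma orbit_gen_grpS (A B : {set T}) x : A \subset B -> orb A x \subset orb B x.
Proof. by move=> sAB; apply/imsetS/genS/imsetS. Qed.

Lemma orbit_str_partition (S : {set T}) : is_part (pi S).
Proof.
have -> : pi S = orbit 'P (gen_grp op S) @: [set: T].
  by apply/setP => B; apply/imsetP/imsetP => -[x _ ->]; exists x.
by apply: orbit_partition; apply/subsetP => p _; apply: perm_astabs.
Qed.

Lemma orbit_strS (A B : {set T}) : A \subset B -> refines (pi A) (pi B).
Proof.
move=> sAB; apply/forall_inP => _ /imsetP [x _ ->]; apply/exists_inP.
by exists (orb B x); [apply: imset_f | apply: orbit_gen_grpS].
Qed.

Lemma refines_orbit (R M : {set T}) x : refines (pi R) (pi M) -> orb R x \subset orb M x.
Proof.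
move=> /forall_inP refRM.
have /refRM /exists_inP [_ /imsetP [w _ ->] sub] : orb R x \in pi R by apply: imset_f.
have /orbit_eqP -> := subsetP sub x (orbit_refl _ _ x).
exact: sub.
Qed.

Lemma refines_phi_astabs (R M : {set T}) r :
  subrack op M -> refines (pi R) (pi M) -> r \in R -> phi r \in 'N(M | 'P).
Proof.
move=> subM refRM Rr; apply: perm_astabs => x Mx.
apply: (subsetP (orbit_sub_subrack subM Mx)); apply: (subsetP (refines_orbit x refRM)).
exact/mem_orbit/phi_gen_grp.
Qed.

Hypothesis connX : connected op.

Lemma Inn_stable_setT (M : {set T}) x :
  [acts Inn op, on M | 'P] -> x \in M -> M = [set: T].
Proof.
move=> InnM Mx; apply/eqP; rewrite eqEsubset subsetT.
by rewrite -(atransP connX x (in_setT x)) acts_sub_orbit.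
Qed.

(* Elements with trivial phi form an Inn-stable set by [phi_op], hence all of X
   once one exists; then Inn is trivial and stabilises S. *)
Lemma phi_neq1 (S : {set T}) a : a \in S -> S != [set: T] -> phi a != 1.
Proof.
move=> Sa; apply: contra_neq => phia1.
pose K := [set x | phi x \in [1 {perm T}]].
have InnK : [acts Inn op, on K | 'P].
  rewrite gen_subG; apply/subsetP => _ /imsetP [b _ ->]; apply: perm_astabs => x.
  by rewrite !inE phiE phi_op => /eqP ->; rewrite mulg1 mulVg.
have phi1 b : phi b = 1.
  have : b \in K by rewrite (Inn_stable_setT InnK (_ : a \in K)) ?inE ?phia1.
  by rewrite !inE => /eqP.
apply: (Inn_stable_setT _ Sa); rewrite gen_subG; apply/subsetP => _ /imsetP [b _ ->].
by rewrite phi1 group1.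
Qed.

Lemma maximal_subrack_phi_astabs (M : {set T}) x0 x :
  maximal_subrack op M -> x0 \in M -> phi x \in 'N(M | 'P) -> x \in M.
Proof.
move=> /and3P [subM MT /forallP maxM] Mx0 phix; apply: contraR MT => Mx.
pose N := [set y | phi y \in 'N(M | 'P)].
have MN : M \proper N.
  rewrite properE; apply/andP; split; last by apply/subsetPn; exists x; rewrite /N 1?inE.
  by apply/subsetP => y My; rewrite inE subrack_phi_astabs.
have /eqP NT := implyP (maxM N) (introT andP (conj (subrack_phi_preim _) MN)).
apply/eqP/(Inn_stable_setT _ Mx0); rewrite gen_subG; apply/subsetP => _ /imsetP [y _ ->].
have : y \in N by rewrite NT in_setT.
by rewrite in_set.
Qed.

Lemma refines_maximal_sub (R M : {set T}) x0 :
  maximal_subrack op M -> x0 \in M -> refines (pi R) (pi M) -> R \subset M.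
Proof.
move=> maxM Mx0 refRM; apply/subsetP => r Rr.
apply: (maximal_subrack_phi_astabs maxM Mx0).
by case/and3P: maxM => subM _ _; apply: refines_phi_astabs subM refRM Rr.
Qed.

Definition orbit_meet_rel (F : {set {set T}}) : rel T :=
  fun x y => [forall M in F, y \in orb M x].

Definition orbit_meet (F : {set {set T}}) : {set {set T}} :=
  equivalence_partition (orbit_meet_rel F) [set: T].

Lemma orbit_meet_rel_equiv (F : {set {set T}}) :
  {in [set: T] & &, equivalence_rel (orbit_meet_rel F)}.
Proof.
move=> x y z _ _ _; split; first by apply/forall_inP => M _; apply: orbit_refl.
move=> /forall_inP Fxy; apply/forall_inP/forall_inP => Fz M FM; have := Fz M FM;
  by have /orbit_eqP -> : x \in orb M y by rewrite orbit_sym Fxy.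
Qed.

Lemma orbit_meet_partition (F : {set {set T}}) : is_part (orbit_meet F).
Proof. exact: equivalence_partitionP (@orbit_meet_rel_equiv F). Qed.

Lemma orbit_meet_refines (F : {set {set T}}) M : M \in F -> refines (orbit_meet F) (pi M).
Proof.
move=> FM; apply/forall_inP => _ /imsetP [x _ ->]; apply/exists_inP.
exists (orb M x); first exact: imset_f.
by apply/subsetP => y; rewrite inE => /andP [_ /forall_inP]; apply.
Qed.

Lemma orbit_meet_glb (F : {set {set T}}) (P : {set {set T}}) :
  is_part P -> (forall M, M \in F -> refines P (pi M)) -> refines P (orbit_meet F).
Proof.
move=> /and3P [_ _ P0] refPF; apply/forall_inP => B PB.
have /set0Pn [x Bx] : B != set0 by apply: contraNneq P0 => <-.
apply/exists_inP; exists [set y in [set: T] | orbit_meet_rel F x y]; first exact: imset_f.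
apply/subsetP => y By; rewrite !inE; apply/forall_inP => M FM.
have /exists_inP [_ /imsetP [w _ ->] sBC] := forall_inP (refPF M FM) B PB.
by have /orbit_eqP -> := subsetP sBC x Bx; apply: (subsetP sBC).
Qed.

Definition maximals_over (S : {set T}) : {set {set T}} :=
  [set M | maximal_subrack op M & S \subset M].

Local Notation meet S := (orbit_meet (maximals_over S)).

Lemma maximals_over_sub (S M : {set T}) : M \in maximals_over S -> S \subset M.
Proof. by rewrite inE => /andP []. Qed.

Lemma maximals_overS (S R M : {set T}) :
  S \subset R -> M \in maximals_over R -> M \in maximals_over S.
Proof. by move=> sSR; rewrite !inE => /andP [-> /(subset_trans sSR)]. Qed.

Lemma orbit_str_refines_meet (S : {set T}) : refines (pi S) (meet S).
Proof.
apply: orbit_meet_glb; first exact: orbit_str_partition.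
by move=> M /maximals_over_sub; apply: orbit_strS.
Qed.

Section InfR.
Variable S : {set T}.
Hypothesis infS : InfR op S.

Lemma InfR_bigcap : S = \bigcap_(M in maximals_over S) M.
Proof.
case: infS => _ _ _ [F [maxF ->]]; apply/setP => x; apply/bigcapP/bigcapP => Fx M.
  by move=> /maximals_over_sub /subsetP; apply; apply/bigcapP.
by move=> FM; apply: Fx; rewrite inE maxF //= (bigcap_inf M FM).
Qed.

Lemma InfR_point : exists x, x \in S.
Proof. by case: infS => _ _ /set0Pn. Qed.

Lemma InfR_maximal_over : exists M, M \in maximals_over S.
Proof.
case: (set_0Vmem (maximals_over S)) => [noM | [M SM]]; last by exists M.
by case: infS => _ + _ _; rewrite InfR_bigcap noM big_set0 eqxx.
Qed.

Lemma InfR_sub (R : {set T}) :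
  (forall M, M \in maximals_over S -> refines (pi R) (pi M)) -> R \subset S.
Proof.
move=> refR; have [x0 Sx0] := InfR_point; rewrite InfR_bigcap.
apply/bigcapsP => M SM; have := SM; rewrite inE => /andP [maxM sSM].
exact: refines_maximal_sub maxM (subsetP sSM _ Sx0) (refR M SM).
Qed.

Lemma meet_neq_top : meet S != part_top n.
Proof.
apply/eqP => meet_top; have [M SM] := InfR_maximal_over; have [x0 Sx0] := InfR_point.
have := SM; rewrite inE => /andP [/and3P [subM MT _] /subsetP sSM].
move/negP: MT; apply; rewrite eqEsubset subsetT /=; apply/subsetP => y _.
have : [set y in [set: T] | orbit_meet_rel (maximals_over S) x0 y] \in meet S.
  exact: imset_f.
rewrite meet_top inE => /eqP/setP/(_ y); rewrite !inE => /forall_inP/(_ M SM) x0y.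
exact: (subsetP (orbit_sub_subrack subM (sSM _ Sx0))).
Qed.

Lemma meet_neq_bot : meet S != part_bot n.
Proof.
apply/eqP => meet_bot; have [a Sa] := InfR_point.
case: infS => _ ST _ _; move/negP: (phi_neq1 Sa ST); apply; apply/eqP/permP => z.
have /(forall_inP (orbit_str_refines_meet S)) : orb S z \in pi S by apply: imset_f.
rewrite meet_bot => /exists_inP [_ /imsetP [w _ ->] /subsetP sub].
have /set1P zw := sub _ (orbit_refl _ _ z).
by have /set1P := sub _ (mem_orbit 'P z (phi_gen_grp Sa)); rewrite perm1 -zw.
Qed.

Lemma InfR_eta : eta op S = S.
Proof.
apply/eqP; rewrite eqEsubset; apply/andP; split.
  apply/bigcupsP => R /andP [_ /eqP piR]; apply: InfR_sub => M /maximals_over_sub sSM.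
  by rewrite piR; apply: orbit_strS.
by apply: (bigcup_sup S); rewrite eqxx andbT; case: infS.
Qed.

Lemma InfPi_meet : InfPi (pi_maximals op) (meet S).
Proof.
split; [exact: orbit_meet_partition | exact: meet_neq_bot | exact: meet_neq_top |].
exists (pi @: maximals_over S); split.
  by apply/imsetS/subsetP => M; rewrite !inE => /andP [].
split; first exact: orbit_meet_partition.
split; first by move=> _ /imsetP [M SM ->]; apply: orbit_meet_refines.
by move=> P partP refP; apply: orbit_meet_glb => // M SM; apply/refP/imset_f.
Qed.

End InfR.

Lemma InfR_subE (S R : {set T}) : InfR op S -> InfR op R ->
  S \subset R <-> refines (pi S) (pi R).
Proof.
move=> infS infR; split; first exact: orbit_strS.
move=> refSR; apply: (InfR_sub infR) => M /maximals_over_sub sRM.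
exact: (refines_trans refSR (orbit_strS sRM)).
Qed.

Lemma InfR_sub_meetE (S R : {set T}) : InfR op S -> InfR op R ->
  S \subset R <-> refines (meet S) (meet R).
Proof.
move=> infS infR; split => [sSR | refSR].
  apply: orbit_meet_glb; first exact: orbit_meet_partition.
  by move=> M /(maximals_overS sSR); apply: orbit_meet_refines.
apply: (InfR_sub infR) => M RM.
apply: (refines_trans (orbit_str_refines_meet S)).
exact: (refines_trans refSR (orbit_meet_refines RM)).
Qed.

End Rack.

Theorem mainTheorem4 (n : nat) (op : 'I_n -> 'I_n -> 'I_n) :
  is_rack op -> connected op ->
  (forall S, InfR op S -> eta op S = S) /\
  (forall S R, InfR op S -> InfR op R ->
     (S \subset R) <-> refines (orbit_str op S) (orbit_str op R)) /\
  (exists f : {set 'I_n} -> {set {set 'I_n}},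
     (forall S, InfR op S -> InfPi (pi_maximals op) (f S)) /\
     (forall S R, InfR op S -> InfR op R ->
        (S \subset R) <-> refines (f S) (f R))).
Proof.
move=> rackX connX; split; [|split].
- exact: InfR_eta.
- exact: InfR_subE.
exists (fun S => orbit_meet op (maximals_over op S)); split.
- exact: InfPi_meet.
- exact: InfR_sub_meetE.
Qed.
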